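(* Let $\rho\in(0,1)\cup(1,\infty)$, $\xi\in\mathbb{R}$, and $H=\frac{1}{2(1+\rho\sinh^2\chi)}\big(\cosh^2\chi P_\chi^2+\frac{P_\phi^2}{\tanh^2\chi}+\xi\sinh^2\chi\big)$ on $(\chi,\phi)\in(0,\infty)\times\mathbb{S}^1$. Consider trajectories of the Hamiltonian flow on the level set $H=E$, $P_\phi=L>0$, with $\phi$ normalized by a rotation so that $\phi=0$ where $\chi$ is minimal. Let $\sigma=2(\rho-1)E-\xi$, $e=\sqrt{1+\frac{L^2\sigma}{(E+L^2/2)^2}}$ and $E_+=L\big[\sqrt{\xi+\rho(\rho-1)L^2}-(\rho-\tfrac12)L\big]$. If $E\in[E_+,\frac{\xi}{2\rho})$ and $\xi-\rho L^2>0$, the trajectories have equation $$\frac{L^2}{\tanh^2\chi}=\Big(E+\frac{L^2}{2}\Big)\big(1+e\cos(2\phi)\big),$$ and they are closed curves since $e<1$. *)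

From Stdlib Require Import Reals.
From Coquelicot Require Import Coquelicot.
Open Scope R_scope.

Definition Ham (rho xi : R) (chi phi pchi pphi : R) : R :=
  (cosh chi ^ 2 * pchi ^ 2 + pphi ^ 2 / tanh chi ^ 2 + xi * sinh chi ^ 2)
  / (2 * (1 + rho * sinh chi ^ 2)).

(* A trajectory of the Hamiltonian flow, defined for all times t,
   with chi(t) in (0, oo), phi a real lift of the angle in S^1.
   Hamilton's equations:
     chi' = dH/dP_chi, phi' = dH/dP_phi, P_chi' = -dH/dchi, P_phi' = -dH/dphi. *)
Definition hamiltonian_trajectory (rho xi : R)
    (chi phi pchi pphi : R -> R) : Prop :=
  forall t : R,
    0 < chi t /\
    is_derive chi t (Derive (fun p => Ham rho xi (chi t) (phi t) p (pphi t)) (pchi t)) /\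
    is_derive phi t (Derive (fun p => Ham rho xi (chi t) (phi t) (pchi t) p) (pphi t)) /\
    is_derive pchi t (- Derive (fun c => Ham rho xi c (phi t) (pchi t) (pphi t)) (chi t)) /\
    is_derive pphi t (- Derive (fun f => Ham rho xi (chi t) f (pchi t) (pphi t)) (phi t)).

Definition sigma_par (rho xi E : R) : R := 2 * (rho - 1) * E - xi.

Definition ecc2 (rho xi E L : R) : R :=
  1 + L ^ 2 * sigma_par rho xi E / (E + L ^ 2 / 2) ^ 2.

Definition ecc (rho xi E L : R) : R := sqrt (ecc2 rho xi E L).

Definition E_plus (rho xi L : R) : R :=
  L * (sqrt (xi + rho * (rho - 1) * L ^ 2) - (rho - 1 / 2) * L).

(* Put [s = sinh chi] and [P = cosh chi * P_chi]; along a trajectory with [H = E], [P_phi = L]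
   the quantities [w = L^2 / tanh^2 chi - (E + L^2/2)] and [q = L P / s] obey
   [w' = -2 q phi'] and [q' = 2 w phi'], while the energy relation reads
   [q^2 + w^2 = (E + L^2/2)^2 + L^2 sigma = (E + L^2/2)^2 e^2].  At the minimum of [chi] the
   momentum [P] vanishes, so [q = 0] there and [w = w(t0) cos (2 phi)] everywhere; as [w(t0) >= 0],
   this gives [w(t0) = (E + L^2/2) e].  Finally the
   assumptions on [E] give [E + L^2/2 > 0] and [sigma < 0], i.e. [e < 1]. *)

From Stdlib Require Import Reals Lra.
From Coquelicot Require Import Coquelicot.
Open Scope R_scope.

Lemma cosh_sq x : cosh x ^ 2 = 1 + sinh x ^ 2.
Proof.
  unfold cosh, sinh. rewrite exp_Ropp. pose proof (exp_pos x). field. lra.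
Qed.

Lemma cosh_pos x : 0 < cosh x.
Proof. unfold cosh. pose proof (exp_pos x). pose proof (exp_pos (- x)). lra. Qed.

Lemma sinh_pos x : 0 < x -> 0 < sinh x.
Proof. intros Hx. rewrite <- sinh_0. now apply sinh_lt. Qed.

Lemma inv_tanh_sq x : sinh x <> 0 -> / tanh x ^ 2 = 1 + / sinh x ^ 2.
Proof.
  intros Hs. pose proof (cosh_pos x). unfold tanh.
  replace (1 + / sinh x ^ 2) with (cosh x ^ 2 / sinh x ^ 2)
    by (rewrite cosh_sq; field; exact Hs).
  field. split; lra.
Qed.

Lemma sinh_le x y : x <= y -> sinh x <= sinh y.
Proof. intros [Hxy | ->]; [left; now apply sinh_lt | right; reflexivity]. Qed.

Lemma is_derive_sinh x : is_derive sinh x (cosh x).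
Proof. apply is_derive_Reals, derivable_pt_lim_sinh. Qed.

Lemma is_derive_cosh x : is_derive cosh x (sinh x).
Proof. apply is_derive_Reals, derivable_pt_lim_cosh. Qed.

(* Both sides use [/ 0 = 0] when [sinh x = 0]. *)
Lemma Ham_sinh rho xi x f p pp :
  Ham rho xi x f p pp =
  ((1 + sinh x ^ 2) * p ^ 2 + pp ^ 2 * (1 + sinh x ^ 2) / sinh x ^ 2 + xi * sinh x ^ 2)
  / (2 * (1 + rho * sinh x ^ 2)).
Proof.
  unfold Ham, tanh. rewrite <- cosh_sq. f_equal. f_equal. f_equal.
  pose proof (cosh_pos x).
  destruct (Req_dec (sinh x) 0) as [H0 | H0].
  - rewrite H0. unfold Rdiv. rewrite !Rmult_0_l, pow_ne_zero, !Rinv_0 by discriminate. ring.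
  - field. split; lra.
Qed.

Section HamPartials.
Variables (rho xi x f p pp : R).
Hypothesis D_neq0 : 1 + rho * sinh x ^ 2 <> 0.

Lemma Derive_Ham_pchi :
  Derive (fun p' => Ham rho xi x f p' pp) p = cosh x ^ 2 * p / (1 + rho * sinh x ^ 2).
Proof.
  apply is_derive_unique. unfold Ham. auto_derive; [easy|]. field. exact D_neq0.
Qed.

Hypothesis sinh_neq0 : sinh x <> 0.

Lemma Derive_Ham_pphi :
  Derive (fun pp' => Ham rho xi x f p pp') pp
  = pp * (1 + sinh x ^ 2) / (sinh x ^ 2 * (1 + rho * sinh x ^ 2)).
Proof.
  rewrite (Derive_ext _ _ _ (fun pp' => Ham_sinh rho xi x f p pp')).
  apply is_derive_unique. auto_derive; [easy|]. field. split; [exact D_neq0|exact sinh_neq0].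
Qed.

Lemma Derive_Ham_chi :
  Derive (fun c => Ham rho xi c f p pp) x
  = sinh x * cosh x * (p ^ 2 - pp ^ 2 / sinh x ^ 4 + xi - 2 * rho * Ham rho xi x f p pp)
    / (1 + rho * sinh x ^ 2).
Proof.
  set (h := fun s => ((1 + s ^ 2) * p ^ 2 + pp ^ 2 * (1 + s ^ 2) / s ^ 2 + xi * s ^ 2)
                     / (2 * (1 + rho * s ^ 2))).
  rewrite (Derive_ext _ (fun c => h (sinh c)) _ (fun c => Ham_sinh rho xi c f p pp)).
  eassert (Hh : is_derive h (sinh x) _).
  { unfold h. auto_derive; [| reflexivity].
    change (sinh x ^ 2 <> 0 /\ 2 * (1 + rho * sinh x ^ 2) <> 0 /\ True).
    repeat split; [apply pow_nonzero, sinh_neq0 | lra]. }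
  pose proof (is_derive_comp _ _ _ _ _ Hh (is_derive_sinh x)) as Hc.
  apply is_derive_unique.
  match goal with |- is_derive _ _ ?d => match type of Hc with is_derive _ _ ?l =>
    replace d with l; [exact Hc|] end end.
  rewrite Ham_sinh. unfold scal; simpl; unfold mult; simpl.
  field. split; [exact sinh_neq0 | lra].
Qed.

End HamPartials.

Lemma is_derive_zero_const (F : R -> R) t s : (forall u, is_derive F u 0) -> F t = F s.
Proof.
  intros HF. destruct (Rtotal_order t s) as [Hts | [-> | Hst]].
  - now apply eq_is_derive.
  - reflexivity.
  - symmetry. now apply eq_is_derive.
Qed.

Lemma is_derive_at_min (f : R -> R) t0 l :
  (forall t, f t0 <= f t) -> is_derive f t0 l -> l = 0.
Proof.
  intros Hmin Hf.
  set (pr := exist _ l (proj1 (is_derive_Reals _ _ _) Hf) : derivable_pt f t0).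
  exact (deriv_minimum f (t0 - 1) (t0 + 1) t0 pr ltac:(lra) ltac:(lra) (fun t _ _ => Hmin t)).
Qed.

(* [(w + i q) e^(-2 i a)] is constant. *)
Lemma rotating_pair_cos (w q a a' : R -> R) s :
  (forall t, is_derive a t (a' t)) ->
  (forall t, is_derive w t (-2 * q t * a' t)) ->
  (forall t, is_derive q t (2 * w t * a' t)) ->
  q s = 0 -> cos (2 * a s) = 1 ->
  forall t, w t = w s * cos (2 * a t).
Proof.
  intros Ha Hw Hq Hqs Hcs t.
  assert (Hss : sin (2 * a s) = 0).
  { pose proof (sin2_cos2 (2 * a s)) as H. rewrite Hcs in H. unfold Rsqr in H. nra. }
  assert (Hder : forall u, Derive (fun x => a x) u = a' u
                    /\ Derive (fun x => w x) u = -2 * q u * a' u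
                    /\ Derive (fun x => q x) u = 2 * w u * a' u).
  { intro u. repeat split; now apply is_derive_unique. }
  assert (Hex : forall u, ex_derive a u /\ ex_derive w u /\ ex_derive q u).
  { intro u. repeat split; eexists; eauto. }
  assert (I1 : w t * cos (2 * a t) + q t * sin (2 * a t) = w s).
  { rewrite (is_derive_zero_const (fun u => w u * cos (2 * a u) + q u * sin (2 * a u)) t s),
      Hcs, Hss, Hqs; [ring|].
    intro u. destruct (Hex u) as (? & ? & ?). auto_derive; [tauto|].
    destruct (Hder u) as (-> & -> & ->). ring. }
  assert (I2 : w t * sin (2 * a t) - q t * cos (2 * a t) = 0).
  { rewrite (is_derive_zero_const (fun u => w u * sin (2 * a u) - q u * cos (2 * a u)) t s),
      Hcs, Hss, Hqs; [ring|].
    intro u. destruct (Hex u) as (? & ? & ?). auto_derive; [tauto|].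
    destruct (Hder u) as (-> & -> & ->). ring. }
  pose proof (sin2_cos2 (2 * a t)) as H. unfold Rsqr in H.
  transitivity ((w t * cos (2 * a t) + q t * sin (2 * a t)) * cos (2 * a t)
                + (w t * sin (2 * a t) - q t * cos (2 * a t)) * sin (2 * a t)).
  - replace (w t) with (w t * (sin (2 * a t) * sin (2 * a t) + cos (2 * a t) * cos (2 * a t)))
      at 1 by (rewrite H; ring). ring.
  - rewrite I1, I2. ring.
Qed.

Lemma cos_double_not_const (a a' : R -> R) t0 :
  (forall t, is_derive a t (a' t)) -> a' t0 <> 0 -> ~ (forall t, cos (2 * a t) = 1).
Proof.
  intros Ha Ha0 Hcos.
  assert (Hsin : forall t, sin (2 * a t) = 0).
  { intro t. pose proof (sin2_cos2 (2 * a t)) as H. rewrite Hcos in H. unfold Rsqr in H. nra. }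
  assert (Hd : is_derive (fun t => sin (2 * a t)) t0 (2 * a' t0)).
  { auto_derive; [eexists; apply Ha|].
    replace (Derive (fun x => a x) t0) with (a' t0) by (symmetry; now apply is_derive_unique).
    rewrite Hcos. ring. }
  assert (Hd0 : is_derive (fun t => sin (2 * a t)) t0 0).
  { apply (is_derive_ext (fun _ => 0)); [intro t; now rewrite Hsin | exact (is_derive_const 0 t0)]. }
  apply Ha0. pose proof (is_derive_unique _ _ _ Hd). pose proof (is_derive_unique _ _ _ Hd0).
  lra.
Qed.

Section EnergyWindow.
Variables (rho xi E L : R).
Hypothesis L_pos : 0 < L.
Hypothesis xi_gt : xi - rho * L ^ 2 > 0.

Let a := sqrt (xi + rho * (rho - 1) * L ^ 2).

Lemma sqrt_disc_sq : a * a = xi + rho * (rho - 1) * L ^ 2.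
Proof. apply sqrt_sqrt. nra. Qed.

Lemma sqrt_disc_nonneg : 0 <= a.
Proof. apply sqrt_pos. Qed.

Lemma sqrt_disc_gt : rho * L < a.
Proof. pose proof sqrt_disc_sq. pose proof sqrt_disc_nonneg. nra. Qed.

Lemma shifted_energy_pos : E_plus rho xi L <= E -> 0 < E + L ^ 2 / 2.
Proof. intros HE. pose proof sqrt_disc_gt. unfold E_plus in HE. fold a in HE. nra. Qed.

Lemma ecc2_scaled : E + L ^ 2 / 2 <> 0 ->
  (E + L ^ 2 / 2) ^ 2 * ecc2 rho xi E L = (E + L ^ 2 / 2) ^ 2 + L ^ 2 * sigma_par rho xi E.
Proof. intros Hc. unfold ecc2. field. lra. Qed.

(* [E_plus] is the larger root of [(E + L^2/2)^2 + L^2 sigma], the smaller one being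
   [E_plus - 2 L a]. *)
Lemma ecc2_nonneg : E_plus rho xi L <= E -> 0 <= ecc2 rho xi E L.
Proof.
  intros HE. pose proof (shifted_energy_pos HE) as Hc.
  pose proof sqrt_disc_sq. pose proof sqrt_disc_nonneg.
  assert (Hroots : (E + L ^ 2 / 2) ^ 2 + L ^ 2 * sigma_par rho xi E
                   = (E - E_plus rho xi L) * (E - E_plus rho xi L + 2 * L * a)).
  { unfold sigma_par, E_plus. fold a. nra. }
  assert (Hprod : 0 <= (E + L ^ 2 / 2) ^ 2 * ecc2 rho xi E L).
  { rewrite ecc2_scaled, Hroots by lra. apply Rmult_le_pos; nra. }
  apply (Rmult_le_reg_l ((E + L ^ 2 / 2) ^ 2)); [apply pow_lt; lra | lra].
Qed.

Lemma sigma_par_neg :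
  (0 < rho < 1 \/ 1 < rho) -> E_plus rho xi L <= E < xi / (2 * rho) -> sigma_par rho xi E < 0.
Proof.
  intros Hrho [HE1 HE2]. unfold sigma_par. destruct Hrho as [Hr | Hr].
  - pose proof sqrt_disc_sq. pose proof sqrt_disc_gt.
    assert (Hsq : 2 * (1 - rho) * E_plus rho xi L + xi = (a + (1 - rho) * L) ^ 2).
    { unfold E_plus. fold a. nra. }
    assert (0 < (a + (1 - rho) * L) ^ 2) by (apply pow_lt; nra). nra.
  - assert (2 * rho * E < xi).
    { apply Rmult_lt_compat_l with (r := 2 * rho) in HE2; [|lra].
      replace (2 * rho * (xi / (2 * rho))) with xi in HE2 by (field; lra). lra. }
    destruct (Rle_or_lt E 0); nra.
Qed.

End EnergyWindow.

Lemma ecc_lt_1 rho xi E L : L <> 0 -> E + L ^ 2 / 2 <> 0 -> sigma_par rho xi E < 0 ->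
  ecc rho xi E L < 1.
Proof.
  intros HL Hc Hsig. unfold ecc.
  assert (Hlt : ecc2 rho xi E L < 1).
  { unfold ecc2.
    assert (0 < L ^ 2) by (rewrite <- Rsqr_pow2; now apply Rsqr_pos_lt).
    assert (0 < / (E + L ^ 2 / 2) ^ 2)
      by (apply Rinv_0_lt_compat; rewrite <- Rsqr_pow2; now apply Rsqr_pos_lt).
    assert (L ^ 2 * sigma_par rho xi E < 0) by nra.
    unfold Rdiv. nra. }
  destruct (Rle_or_lt (ecc2 rho xi E L) 0) as [Hneg | Hpos].
  - rewrite sqrt_neg_0 by exact Hneg. lra.
  - rewrite <- sqrt_1. apply sqrt_lt_1_alt. lra.
Qed.

Section Trajectory.
Variables (rho xi E L : R) (chi phi pchi pphi : R -> R).
Hypothesis rho_ge0 : 0 <= rho.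
Hypothesis traj : hamiltonian_trajectory rho xi chi phi pchi pphi.
Hypothesis energy : forall t, Ham rho xi (chi t) (phi t) (pchi t) (pphi t) = E.
Hypothesis momentum : forall t, pphi t = L.

(* With [P = cosh chi * P_chi] the equations of motion become rational in [sinh chi]. *)
Let sh t := sinh (chi t).
Let P t := cosh (chi t) * pchi t.
Let D t := 1 + rho * sh t ^ 2.
Let omega t := L * (1 + sh t ^ 2) / (sh t ^ 2 * D t).

Lemma sh_pos t : 0 < sh t.
Proof. apply sinh_pos, (traj t). Qed.

Lemma D_pos t : 0 < D t.
Proof. unfold D. pose proof (pow2_ge_0 (sh t)). nra. Qed.

Lemma energy_reduced t :
  P t ^ 2 + L ^ 2 * (1 + sh t ^ 2) / sh t ^ 2 + xi * sh t ^ 2 = 2 * E * D t.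
Proof.
  pose proof (sh_pos t). pose proof (D_pos t).
  rewrite <- (energy t), Ham_sinh, momentum. unfold P, D, sh in *.
  rewrite Rpow_mult_distr, cosh_sq. field. split; lra.
Qed.

Lemma chi_derive t : is_derive chi t (cosh (chi t) ^ 2 * pchi t / D t).
Proof.
  destruct (traj t) as (_ & Hchi & _).
  rewrite Derive_Ham_pchi in Hchi; [exact Hchi | apply Rgt_not_eq, D_pos].
Qed.

Lemma phi_derive t : is_derive phi t (omega t).
Proof.
  destruct (traj t) as (_ & _ & Hphi & _).
  rewrite Derive_Ham_pphi, momentum in Hphi; 
    [exact Hphi | apply Rgt_not_eq, D_pos | apply Rgt_not_eq, sh_pos].
Qed.

Lemma pchi_derive t : is_derive pchi t
  (- (sh t * cosh (chi t) * (pchi t ^ 2 - L ^ 2 / sh t ^ 4 + xi - 2 * rho * E) / D t)).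
Proof.
  destruct (traj t) as (_ & _ & _ & Hpchi & _).
  rewrite Derive_Ham_chi, energy, momentum in Hpchi; 
    [exact Hpchi | apply Rgt_not_eq, D_pos | apply Rgt_not_eq, sh_pos].
Qed.

Lemma sh_derive t : is_derive sh t ((1 + sh t ^ 2) * P t / D t).
Proof.
  pose proof (D_pos t).
  pose proof (is_derive_comp _ _ _ _ _ (is_derive_sinh (chi t)) (chi_derive t)) as Hc.
  match goal with |- is_derive _ _ ?d => match type of Hc with is_derive _ _ ?l =>
    replace d with l; [exact Hc|] end end.
  unfold scal; cbn -[pow]; unfold mult; cbn -[pow]. unfold P, D, sh in *.
  rewrite <- cosh_sq. field. lra.
Qed.

Lemma P_derive t :
  is_derive P t (sh t * (1 + sh t ^ 2) * (2 * rho * E - xi + L ^ 2 / sh t ^ 4) / D t).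
Proof.
  pose proof (sh_pos t). pose proof (D_pos t).
  assert (Hcosh := is_derive_comp _ _ _ _ _ (is_derive_cosh (chi t)) (chi_derive t)).
  assert (HP := is_derive_mult _ _ _ _ _ Hcosh (pchi_derive t) (fun _ _ => Rmult_comm _ _)).
  match goal with |- is_derive _ _ ?d => match type of HP with is_derive _ _ ?l =>
    replace d with l; [exact HP|] end end.
  unfold scal, plus; cbn -[pow]; unfold mult, plus; cbn -[pow]. unfold P, D, sh in *.
  rewrite <- cosh_sq. field. split; lra.
Qed.

Let w t := L ^ 2 / sh t ^ 2 + L ^ 2 / 2 - E.
Let q t := L * P t / sh t.

Lemma w_derive t : is_derive w t (-2 * q t * omega t).
Proof.
  pose proof (sh_pos t). pose proof (D_pos t).
  unfold w. auto_derive.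
  - split; [eexists; apply sh_derive | split; [nra | easy]].
  - replace (Derive (fun x => sh x) t) with ((1 + sh t ^ 2) * P t / D t)
      by (symmetry; apply is_derive_unique, sh_derive).
    unfold q, omega. field. split; lra.
Qed.

Lemma q_derive t : is_derive q t (2 * w t * omega t).
Proof.
  pose proof (sh_pos t). pose proof (D_pos t). pose proof (energy_reduced t).
  unfold q. auto_derive.
  - split; [eexists; apply P_derive | split; [eexists; apply sh_derive | split; [lra | easy]]].
  - replace (Derive (fun x => sh x) t) with ((1 + sh t ^ 2) * P t / D t)
      by (symmetry; apply is_derive_unique, sh_derive).
    replace (Derive (fun x => P x) t)
      with (sh t * (1 + sh t ^ 2) * (2 * rho * E - xi + L ^ 2 / sh t ^ 4) / D t)
      by (symmetry; apply is_derive_unique, P_derive).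
    transitivity (2 * w t * omega t - L * (1 + sh t ^ 2) / (sh t ^ 2 * D t)
      * (P t ^ 2 + L ^ 2 * (1 + sh t ^ 2) / sh t ^ 2 + xi * sh t ^ 2 - 2 * E * D t)).
    + unfold w, omega, D in *. field. split; lra.
    + rewrite H1. ring.
Qed.

Lemma orbit_circle t :
  q t ^ 2 + w t ^ 2 = (E + L ^ 2 / 2) ^ 2 + L ^ 2 * sigma_par rho xi E.
Proof.
  pose proof (sh_pos t). pose proof (D_pos t). pose proof (energy_reduced t).
  transitivity ((E + L ^ 2 / 2) ^ 2 + L ^ 2 * sigma_par rho xi E + L ^ 2 / sh t ^ 2
    * (P t ^ 2 + L ^ 2 * (1 + sh t ^ 2) / sh t ^ 2 + xi * sh t ^ 2 - 2 * E * D t)).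
  - unfold q, w, D, sigma_par in *. field. lra.
  - rewrite H1. ring.
Qed.

Section AtMinimum.
Variable t0 : R.
Hypothesis chi_min : forall t, chi t0 <= chi t.

Lemma sh_min t : sh t0 <= sh t.
Proof. apply sinh_le, chi_min. Qed.

Lemma q_at_min : q t0 = 0.
Proof.
  pose proof (sh_pos t0). pose proof (D_pos t0).
  pose proof (is_derive_at_min _ _ _ sh_min (sh_derive t0)) as Hsh'.
  assert (HP : P t0 = 0).
  { apply (Rmult_eq_reg_l ((1 + sh t0 ^ 2) / D t0)).
    - rewrite Rmult_0_r, <- Hsh'. field. lra.
    - apply Rgt_not_eq. apply Rdiv_lt_0_compat; [nra | lra]. }
  unfold q. rewrite HP. field. lra.
Qed.

Lemma w_le_at_min t : w t <= w t0.
Proof.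
  pose proof (sh_pos t0). pose proof (sh_min t).
  assert (/ sh t ^ 2 <= / sh t0 ^ 2).
  { apply Rinv_le_contravar; [apply pow_lt; lra | apply pow_incr; lra]. }
  unfold w, Rdiv. pose proof (pow2_ge_0 L). nra.
Qed.

Hypothesis L_pos : 0 < L.
Hypothesis phi_min : cos (2 * phi t0) = 1.

Lemma w_cos t : w t = w t0 * cos (2 * phi t).
Proof.
  exact (rotating_pair_cos w q phi omega t0 phi_derive w_derive q_derive q_at_min phi_min t).
Qed.

(* Otherwise [w t0 * cos (2 phi t) <= w t0 < 0] would force [cos (2 phi) = 1] throughout,
   although [phi] keeps turning. *)
Lemma w_at_min_nonneg : 0 <= w t0.
Proof.
  apply Rnot_lt_le. intro Hneg.
  apply (cos_double_not_const phi omega t0 phi_derive).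
  - pose proof (sh_pos t0). pose proof (D_pos t0). apply Rgt_not_eq.
    unfold omega. apply Rdiv_lt_0_compat; [nra | apply Rmult_lt_0_compat; nra].
  - intro t. pose proof (w_le_at_min t) as Hle. rewrite w_cos in Hle.
    pose proof (COS_bound (2 * phi t)). nra.
Qed.

Theorem orbit_equation : 0 < E + L ^ 2 / 2 -> forall t,
  L ^ 2 / tanh (chi t) ^ 2 = (E + L ^ 2 / 2) * (1 + ecc rho xi E L * cos (2 * phi t)).
Proof.
  intros Hc t.
  assert (Hw0sq : w t0 ^ 2 = (E + L ^ 2 / 2) ^ 2 * ecc2 rho xi E L).
  { rewrite ecc2_scaled, <- (orbit_circle t0), q_at_min by lra. ring. }
  assert (Hw0 : w t0 = (E + L ^ 2 / 2) * ecc rho xi E L).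
  { assert (0 <= ecc2 rho xi E L).
    { apply (Rmult_le_reg_l ((E + L ^ 2 / 2) ^ 2)); [apply pow_lt; lra |].
      rewrite Rmult_0_r, <- Hw0sq. apply pow2_ge_0. }
    unfold ecc. rewrite <- (sqrt_pow2 (w t0) w_at_min_nonneg), Hw0sq, sqrt_mult_alt,
      sqrt_pow2 by (try apply pow2_ge_0; lra). reflexivity. }
  replace (L ^ 2 / tanh (chi t) ^ 2) with (E + L ^ 2 / 2 + w t).
  - rewrite w_cos, Hw0. ring.
  - pose proof (sh_pos t). unfold w, sh, Rdiv in *. rewrite inv_tanh_sq by lra. field. lra.
Qed.

End AtMinimum.

End Trajectory.

Theorem proposition13 :
  forall (rho xi E L : R) (chi phi pchi pphi : R -> R),
    ((0 < rho < 1) \/ 1 < rho) ->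
    0 < L ->
    hamiltonian_trajectory rho xi chi phi pchi pphi ->
    (forall t, Ham rho xi (chi t) (phi t) (pchi t) (pphi t) = E) ->
    (forall t, pphi t = L) ->
    (* normalization: phi = 0 (in S^1) at a point where chi is minimal *)
    (exists (t0 : R) (k : Z), (forall t, chi t0 <= chi t) /\ phi t0 = 2 * IZR k * PI) ->
    E_plus rho xi L <= E < xi / (2 * rho) ->
    xi - rho * L ^ 2 > 0 ->
    (forall t, L ^ 2 / tanh (chi t) ^ 2
               = (E + L ^ 2 / 2) * (1 + ecc rho xi E L * cos (2 * phi t))) /\
    0 <= ecc2 rho xi E L /\ ecc rho xi E L < 1.
Proof.
  intros rho xi E L chi phi pchi pphi Hrho HL Htraj HE Hpp [t0 [k [Hmin Hphi0]]] HErange Hxi.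
  pose proof (shifted_energy_pos rho xi E L HL Hxi (proj1 HErange)) as Hc.
  assert (Hcos0 : cos (2 * phi t0) = 1).
  { rewrite cos_2a_sin, (sin_eq_0_1 (phi t0)); [ring|].
    exists (2 * k)%Z. rewrite Hphi0, mult_IZR. ring. }
  split; [|split].
  - exact (orbit_equation rho xi E L chi phi pchi pphi ltac:(lra) Htraj HE Hpp
             t0 Hmin HL Hcos0 Hc).
  - exact (ecc2_nonneg rho xi E L HL Hxi (proj1 HErange)).
  - apply ecc_lt_1; [lra | lra | exact (sigma_par_neg rho xi E L HL Hxi Hrho HErange)].
Qed.
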